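(* Let $\nu\ge1$, $d:\mathbb{Z}^\nu\to\mathbb{C}$ bounded, $J=J_0+D$ on $\ell^2(\mathbb{Z}^\nu)$, and let $u\in\ell^2(\mathbb{Z}^\nu)$, $u\ne0$, satisfy $Ju=\lambda u$ for some $\lambda\in\mathbb{C}$. Then for every $j\in\{1,\dots,\nu\}$, $$\sup\{k_j: k\in\operatorname{supp}(u)\}=\infty\quad\text{and}\quad\inf\{k_j:k\in\operatorname{supp}(u)\}=-\infty,$$ where $k_j$ denotes the $j$-th component of $k\in\mathbb{Z}^\nu$ and $\operatorname{supp}(u)=\{k\in\mathbb{Z}^\nu:u(k)\ne0\}$.
   Context: $J_0$ is the discrete Laplacian on $\ell^2(\mathbb{Z}^\nu)$: $(J_0u)(k)=\sum_{l\in\mathbb{Z}^\nu:\|l\|_1=1}u(k+l)$, where $\|l\|_1=\sum_{j=1}^\nu|l_j|$. $D$ is multiplication by the bounded function $d$, $(Du)(k)=d(k)u(k)$. *)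

From HB Require Import structures.
From mathcomp Require Import all_boot all_order all_algebra.
From Stdlib Require Import Reals.
Set Implicit Arguments. Unset Strict Implicit. Unset Printing Implicit Defensive.
Import Order.TTheory GRing.Theory Num.Theory.

Definition Cx : Type := (R * R)%type.
Definition C0 : Cx := (R0, R0).
Definition Cadd (z w : Cx) : Cx := (Rplus z.1 w.1, Rplus z.2 w.2).
Definition Cmul (z w : Cx) : Cx :=
  (Rminus (Rmult z.1 w.1) (Rmult z.2 w.2), Rplus (Rmult z.1 w.2) (Rmult z.2 w.1)).
Definition Cnorm2 (z : Cx) : R := Rplus (Rmult z.1 z.1) (Rmult z.2 z.2).

Definition lattice (nu : nat) : Type := {ffun 'I_nu -> int}.

(* Note: Posz 1 = 1 and Negz 0 = -1 in int.
   k + s * e_j, where e_j is the j-th standard unit vector. *)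
Definition shift (nu : nat) (k : lattice nu) (j : 'I_nu) (s : int) : lattice nu :=
  [ffun i => GRing.add (k i) (if i == j then s else Posz 0)].

(* Discrete Laplacian: (J0 u)(k) = sum_{||l||_1 = 1} u(k+l); the vectors
   l in Z^nu with ||l||_1 = 1 are exactly +e_j and -e_j, j < nu. *)
Definition J0 (nu : nat) (u : lattice nu -> Cx) (k : lattice nu) : Cx :=
  foldr (fun j acc => Cadd (Cadd (u (shift k j (Posz 1))) (u (shift k j (Negz 0)))) acc)
        C0 (enum 'I_nu).

Definition Jop (nu : nat) (d : lattice nu -> Cx) (u : lattice nu -> Cx)
  (k : lattice nu) : Cx := Cadd (J0 u k) (Cmul (d k) (u k)).

Definition bounded_fun (nu : nat) (d : lattice nu -> Cx) : Prop :=
  exists M : R, forall k, Rle (Cnorm2 (d k)) M.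

Definition in_l2 (nu : nat) (u : lattice nu -> Cx) : Prop :=
  exists M : R, forall s : seq (lattice nu), uniq s ->
    Rle (foldr (fun k acc => Rplus (Cnorm2 (u k)) acc) R0 s) M.

(* Unique continuation in one coordinate direction for J = J0 + D.

   Fix a direction j and a sign s in {1, -1}.  Suppose an eigenfunction u of
   J vanishes on the half-space  s * k_j > B.  Take a point k on the boundary
   layer  s * k_j = B  and put  k' = k + s e_j, which lies in the half-space.
   Evaluating  (J u)(k') = lambda u(k')  there, every term vanishes except
   u(k' - s e_j) = u(k): the neighbours k' +- e_i (i <> j) and k' + s e_j all
   lie in the half-space.  Hence u(k) = 0, so u vanishes on  s * k_j > B - 1.
   Iterating this layer-peeling step, an eigenfunction whose support is
   bounded in the direction s e_j vanishes identically.  Taking s = 1 and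
   s = -1 gives the two halves of the theorem. *)
From HB Require Import structures.
From mathcomp Require Import all_boot all_order all_algebra.
From Stdlib Require Import Reals Classical.
From mathcomp Require Import zify.
Import Order.TTheory GRing.Theory Num.Theory.
Local Open Scope ring_scope.

Lemma Cadd0l (z : Cx) : Cadd C0 z = z.
Proof. by case: z => a b; rewrite /Cadd /C0 /=; f_equal; ring. Qed.

Lemma Cadd0r (z : Cx) : Cadd z C0 = z.
Proof. by case: z => a b; rewrite /Cadd /C0 /=; f_equal; ring. Qed.

Lemma Cmul0r (z : Cx) : Cmul z C0 = C0.
Proof. by case: z => a b; rewrite /Cmul /C0 /=; f_equal; ring. Qed.

Lemma foldr_Cadd_single (I : eqType) (f : I -> Cx) (j : I) (s : seq I) :
  uniq s -> j \in s -> (forall i, i != j -> f i = C0) ->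
  foldr (fun i acc => Cadd (f i) acc) C0 s = f j.
Proof.
move=> us js f0.
have sum0 (t : seq I) : j \notin t -> foldr (fun i acc => Cadd (f i) acc) C0 t = C0.
  elim: t => [|a t IH] //=; rewrite inE negb_or => /andP [ja jt].
  by rewrite f0 1?eq_sym // Cadd0l IH.
elim: s us js => [|a s IH] //= /andP [as_ us]; rewrite inE.
case: (eqVneq j a) => [ja _ | ja /= js]; first by rewrite -ja sum0 ?Cadd0r // ja.
by rewrite f0 1?eq_sym // Cadd0l IH.
Qed.

Lemma shift_at nu (k : lattice nu) j s : shift k j s j = k j + s.
Proof. by rewrite /shift ffunE eqxx. Qed.

Lemma shift_off nu (k : lattice nu) j s i : i != j -> shift k j s i = k i.
Proof. by move=> ij; rewrite /shift ffunE (negbTE ij) addr0. Qed.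

Lemma shiftD nu (k : lattice nu) j a b : shift (shift k j a) j b = shift k j (a + b).
Proof.
apply/ffunP => i; rewrite /shift !ffunE.
by case: (i == j); rewrite ?addrA ?addr0.
Qed.

Lemma shift0 nu (k : lattice nu) j : shift k j 0 = k.
Proof. by apply/ffunP => i; rewrite /shift ffunE; case: (i == j); rewrite addr0. Qed.

Lemma J0_axis nu (u : lattice nu -> Cx) (k : lattice nu) (j : 'I_nu) :
  (forall i, i != j -> u (shift k i 1) = C0 /\ u (shift k i (-1)) = C0) ->
  J0 u k = Cadd (u (shift k j 1)) (u (shift k j (-1))).
Proof.
move=> off; rewrite /J0.
apply: (@foldr_Cadd_single _ (fun i => Cadd (u (shift k i 1)) (u (shift k i (-1))))).
- exact: enum_uniq.
- by rewrite mem_enum.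
- by move=> i /off [-> ->]; rewrite Cadd0l.
Qed.

Section UniqueContinuation.

Variables (nu : nat) (d u : lattice nu -> Cx) (lambda : Cx).
Hypothesis heig : forall k, Jop d u k = Cmul lambda (u k).
Variables (j : 'I_nu) (s : int).
Hypothesis hs : s = 1 \/ s = -1.

Let s2 : s * s = 1.
Proof. by case: hs => ->. Qed.

Lemma layer_vanish (B : int) :
  (forall k : lattice nu, B < s * k j -> u k = C0) ->
  forall k : lattice nu, s * k j = B -> u k = C0.
Proof.
move=> half k kB.
set k' := shift k j s.
have k'j : s * k' j = B + 1 by rewrite shift_at mulrDr s2 kB.
have inside (l : lattice nu) : s * l j = B + 1 -> u l = C0.
  by move=> lj; apply: half; rewrite lj; lia.
have off i : i != j -> u (shift k' i 1) = C0 /\ u (shift k' i (-1)) = C0.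
  by move=> ij; split; apply: inside; rewrite shift_off 1?eq_sym.
have axis : Cadd (u (shift k' j 1)) (u (shift k' j (-1))) = u k.
  have beyond : u (shift k' j s) = C0.
    by apply: half; rewrite shift_at mulrDr s2 k'j; lia.
  have back : shift k' j (- s) = k by rewrite shiftD subrr shift0.
  by case: hs beyond back => -> ->; rewrite ?opprK => ->; rewrite ?Cadd0l ?Cadd0r.
have := heig k'; rewrite /Jop (inside k' k'j) !Cmul0r Cadd0r (@J0_axis _ _ _ j off).
by rewrite axis.
Qed.

Lemma bounded_support_vanish (N : int) :
  (forall k : lattice nu, u k <> C0 -> s * k j <= N) -> forall k, u k = C0.
Proof.
move=> bnd.
have peel (n : nat) : forall k : lattice nu, u k <> C0 -> s * k j <= N - n%:Z.
  elim: n => [|n IH] k uk; first by rewrite subr0; apply: bnd.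
  have half (l : lattice nu) : N - n%:Z < s * l j -> u l = C0.
    by move=> lt; apply: NNPP => ul; have := IH _ ul; lia.
  have := IH _ uk; case: (eqVneq (s * k j) (N - n%:Z)) => [e | ne le]; last by lia.
  by case: uk; apply: layer_vanish half k e.
move=> k; apply: NNPP => uk.
pose gap : int := N - s * k j.
by have := peel (absz gap).+1 k uk; rewrite /gap; lia.
Qed.

Lemma support_unbounded : (exists k, u k <> C0) ->
  forall N : int, exists k : lattice nu, u k <> C0 /\ N < s * k j.
Proof.
move=> [k0 uk0] N; apply: NNPP => none; apply: uk0.
apply: (bounded_support_vanish N) => k uk; rewrite leNgt.
by apply/negP => lt; apply: none; exists k.
Qed.

End UniqueContinuation.

Lemma support_unbounded_above nu (d u : lattice nu -> Cx) (lambda : Cx)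
  (heig : forall k, Jop d u k = Cmul lambda (u k)) (j : 'I_nu) :
  (exists k, u k <> C0) -> forall N : int, exists k : lattice nu, u k <> C0 /\ N < k j.
Proof.
move=> hu0 N; have [k [uk lt]] := @support_unbounded _ _ _ _ heig j _ (or_introl erefl) hu0 N.
by exists k; rewrite mul1r in lt.
Qed.

Lemma support_unbounded_below nu (d u : lattice nu -> Cx) (lambda : Cx)
  (heig : forall k, Jop d u k = Cmul lambda (u k)) (j : 'I_nu) :
  (exists k, u k <> C0) -> forall N : int, exists k : lattice nu, u k <> C0 /\ k j < N.
Proof.
move=> hu0 N; have [k [uk lt]] := @support_unbounded _ _ _ _ heig j _ (or_intror erefl) hu0 (- N).
by exists k; rewrite mulN1r ltrN2 in lt.
Qed.

Local Close Scope ring_scope.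

Theorem mainTheorem4 (nu : nat) (hnu : (0 < nu)%N)
  (d : lattice nu -> Cx) (hd : bounded_fun d)
  (u : lattice nu -> Cx) (hu : in_l2 u) (hu0 : exists k, u k <> C0)
  (lambda : Cx) (heig : forall k, Jop d u k = Cmul lambda (u k)) :
  forall j : 'I_nu,
    (forall N : int, exists k : lattice nu, u k <> C0 /\ (N < k j)%O) /\
    (forall N : int, exists k : lattice nu, u k <> C0 /\ (k j < N)%O).
Proof.
move=> j; split.
- exact: support_unbounded_above heig j hu0.
- exact: support_unbounded_below heig j hu0.
Qed.
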